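(* Suppose $n$ is even, $f:\{0,1\}^n\to\mathbb{R}$ is submodular, and $f(x)<0$ for some $x$ with $\|x\|_1=n/2$. Then there are at least $2^{n/2}$ points $y\in\{0,1\}^n$ such that $f(y)\neq 0$.
   Context: $f$ is submodular if $f(x+\mathbf{e}_i)-f(x)\ge f(y+\mathbf{e}_i)-f(y)$ for all $i$ and all $x\le y$ (coordinatewise) with $x_i=y_i=0$, where $\mathbf{e}_i$ is the $i$-th standard basis vector. *)

From mathcomp Require Import all_boot all_order all_algebra.
From mathcomp Require Import reals.
Set Implicit Arguments. Unset Strict Implicit. Unset Printing Implicit Defensive.
Import Order.TTheory GRing.Theory Num.Theory.
Local Open Scope ring_scope.

(* Points of {0,1}^n are boolean vectors {ffun 'I_n -> bool} (true = 1). *)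
Notation cube n := {ffun 'I_n -> bool}.

Definition cube_le n (x y : cube n) : Prop := forall i, (x i <= y i)%N.

(* x + e_i, used only when x_i = 0: set coordinate i to 1 *)
Definition add_e n (x : cube n) (i : 'I_n) : cube n :=
  [ffun j => if j == i then true else x j].

Definition weight n (x : cube n) : nat := #|[set i | x i]|.

Definition submodular (R : realType) n (f : cube n -> R) : Prop :=
  forall (i : 'I_n) (x y : cube n), cube_le x y -> x i = false -> y i = false ->
    f (add_e y i) - f y <= f (add_e x i) - f x.

From mathcomp Require Import all_boot all_order all_algebra.
From mathcomp Require Import reals.
From mathcomp Require Import lra.
Set Implicit Arguments. Unset Strict Implicit. Unset Printing Implicit Defensive.
Import Order.TTheory GRing.Theory Num.Theory.
Local Open Scope ring_scope.

(* Let S be the support of a point x0 of weight n/2 with f x0 < 0, and T its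
   complement. Either every trace D on S extends to a point y (y on S equal to D)
   with f y <> 0, which gives 2^|S| nonzero points; or some D ⊆ S has f = 0 on
   all of its extensions. In the latter case diminishing returns from D ⊆ S gives
   f(S ∪ E) - f(S) <= f(D ∪ E) - f(D) = 0 for every E ⊆ T, so f(S ∪ E) <= f x0 < 0,
   and these 2^|T| points are nonzero. *)

Section CubeSets.

Variable n : nat.
Implicit Types (A B D S : {set 'I_n}) (x : cube n).

Definition cube_of_set A : cube n := [ffun i => i \in A].

Definition support x : {set 'I_n} := [set i | x i].

Lemma support_cube_of_set A : support (cube_of_set A) = A.
Proof. by apply/setP=> i; rewrite inE ffunE. Qed.

Lemma cube_of_supportK x : cube_of_set (support x) = x.
Proof. by apply/ffunP=> i; rewrite !ffunE inE. Qed.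

Lemma cube_le_of_set A B : A \subset B -> cube_le (cube_of_set A) (cube_of_set B).
Proof.
move=> /subsetP AB i; rewrite !ffunE.
by case iA: (i \in A); rewrite ?(AB i iA).
Qed.

Lemma add_e_cube_of_set A i : add_e (cube_of_set A) i = cube_of_set (i |: A).
Proof. by apply/ffunP=> j; rewrite !ffunE !inE; case: eqP. Qed.

Lemma support_setUI A B S :
  A \subset S -> B \subset ~: S -> support (cube_of_set (A :|: B)) :&: S = A.
Proof.
move=> AS BSc; rewrite support_cube_of_set setIUl (setIidPl AS).
suff -> : B :&: S = set0 by rewrite setU0.
by apply/eqP; rewrite setI_eq0 disjoints_subset.
Qed.

Lemma pow2_card_le_of_traces S (N : {set cube n}) :
  (forall D, D \subset S -> exists2 y, y \in N & support y :&: S = D) ->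
  (2 ^ #|S| <= #|N|)%N.
Proof.
move=> traces; rewrite -card_powerset.
apply: leq_trans (leq_imset_card (fun y => support y :&: S) N).
apply/subset_leq_card/subsetP=> D; rewrite powersetE => /traces [y Ny <-].
exact: imset_f.
Qed.

End CubeSets.

Lemma submodular_setU (R : realType) n (f : cube n -> R) (A B C : {set 'I_n}) :
  submodular f -> A \subset B -> [disjoint B & C] ->
  f (cube_of_set (B :|: C)) - f (cube_of_set B)
    <= f (cube_of_set (A :|: C)) - f (cube_of_set A).
Proof.
move=> subf AB; have [k] := ubnP #|C|; elim: k C => // k IH C ltCk BC.
have [->|[i iC]] := set_0Vmem C; first by rewrite !setU0 !subrr.
set C' := C :\ i.
have defU X : X :|: C = i |: (X :|: C') by rewrite setUCA setD1K.
have BC' : [disjoint B & C'] by apply: disjointWr BC; exact: subsetDl.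
have iBC' : i \notin B :|: C'.
  by rewrite !inE eqxx negb_or (disjointFl BC iC).
have iAC' : i \notin A :|: C'.
  by apply: contra iBC'; rewrite !inE => /orP[/(subsetP AB) ->|->]; rewrite ?orbT.
have step_i := subf i _ _ (cube_le_of_set (setSU C' AB)).
rewrite !ffunE (negbTE iAC') (negbTE iBC') !add_e_cube_of_set in step_i.
have step_C' := IH C' _ BC'.
rewrite (cardsD1 i C) iC ltnS in ltCk.
rewrite defU [A :|: C]defU.
have := step_i erefl erefl; have := step_C' ltCk; lra.
Qed.

Theorem lemma7 (R : realType) (n : nat) (f : {ffun 'I_n -> bool} -> R) :
  ~~ odd n ->
  submodular f ->
  (exists x : {ffun 'I_n -> bool}, weight x = n./2 /\ f x < 0) ->
  (2 ^ n./2 <= #|[set y : {ffun 'I_n -> bool} | f y != 0%R]|)%N.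
Proof.
move=> even_n subf [x0 [wx0 fx0]].
set S := support x0; set N := [set y | f y != 0].
have cardS : #|S| = n./2 by [].
have cardT : #|~: S| = n./2.
  apply/eqP; rewrite -(eqn_add2l #|S|) cardsC card_ord cardS addnn.
  by rewrite -[n in n == _]odd_double_half (negbTE even_n).
case: (boolP [exists D in powerset S,
                [forall V in powerset (~: S), f (cube_of_set (D :|: V)) == 0]]).
- case/exists_inP=> D; rewrite powersetE => DS /forall_inP zeroD.
  rewrite -cardT; apply: pow2_card_le_of_traces => E ET.
  exists (cube_of_set (S :|: E)); last by rewrite setUC support_setUI ?setCK.
  have disjSE : [disjoint S & E] by rewrite disjoint_sym disjoints_subset.
  have := submodular_setU subf DS disjSE.
  have fD0 : f (cube_of_set D) = 0.
    by apply/eqP; rewrite -[D]setU0 zeroD // powersetE sub0set.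
  rewrite (eqP (zeroD E _)) ?powersetE // fD0 cube_of_supportK inE => le.
  by apply: ltr0_neq0; lra.
- move=> /exists_inPn nonzero.
  rewrite -cardS; apply: pow2_card_le_of_traces => D DS.
  have /forall_inPn [V] : ~~ [forall V in powerset (~: S), f (cube_of_set (D :|: V)) == 0].
    by apply: nonzero; rewrite powersetE.
  rewrite powersetE => VT fV.
  by exists (cube_of_set (D :|: V)); [rewrite inE | exact: support_setUI].
Qed.
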